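(* Consider the market objective described in the context and fix a bid profile $\mathcal{B}$ with $J(\mathcal{B}_L)<\infty$. Let $$k_{\mathrm{feas}}=\max\{|R|:\ R\subseteq L,\ J(\mathcal{B}_{L\setminus R})<\infty\}$$ be the maximum number of bidders that can be removed while keeping the problem feasible, and assume $k_{\mathrm{feas}}\ge1$. Then for all $K,S\subseteq L$ with $J(\mathcal{B}_{S\setminus K})<\infty$, $$\frac{1}{k_{\mathrm{feas}}}\sum_{l\in K}\big[J(\mathcal{B}_{S\setminus\{l\}})-J(\mathcal{B}_S)\big]\le J(\mathcal{B}_{S\setminus K})-J(\mathcal{B}_S).$$ Consequently the market objective is weakly supermodular, with supermodularity ratio $\gamma_{\sup}\ge 1/k_{\mathrm{feas}}>0$ (where $k_{\mathrm{feas}}$ is taken as the maximum over the bid profiles considered); in particular, if the problem becomes infeasible whenever any two bidders are removed ($k_{\mathrm{feas}}=1$), the inequality holds with constant $1$.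
   Context: Market model. $L=\{1,\dots,|L|\}$ is a finite set of bidders and $t\ge1$. Bidder $l$ submits a bid function $b_l:\hat{\mathcal X}_l\to\mathbb{R}_+$ with $0\in\hat{\mathcal X}_l\subseteq\mathbb{R}^t_+$, $b_l(0)=0$; a bid profile is $\mathcal{B}=\{b_l\}_{l\in L}$. Fixed functions $d:\mathbb{R}^{t|L|}_+\times\mathbb{R}^p\to\mathbb{R}$ and $g:\mathbb{R}^{t|L|}_+\times\mathbb{R}^p\to\mathbb{R}^q$ are given. For $S\subseteq L$, $$J(\mathcal{B}_S)=\min\Big\{\sum_{l\in S}b_l(x_l)+d(x,y):\ x\in\textstyle\prod_{l\in L}\hat{\mathcal X}_l,\ y\in\mathbb{R}^p,\ g(x,y)\le0,\ x_l=0\ \forall l\notin S\Big\},$$ with value $+\infty$ if the problem is infeasible (minima assumed attained when finite). Supermodularity ratio of the market objective: the largest $\gamma\ge0$ such that for every bid profile $\mathcal{B}$ and all $K,S\subseteq L$ with $J(\mathcal{B}_{S\setminus K})<\infty$, $$\gamma\sum_{l\in K}\big[J(\mathcal{B}_{S\setminus\{l\}})-J(\mathcal{B}_S)\big]\le J(\mathcal{B}_{S\setminus K})-J(\mathcal{B}_S);$$ the objective is weakly supermodular if this ratio is positive. *)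

From Stdlib Require Import Reals ClassicalEpsilon.
From mathcomp Require Import all_boot.
Set Implicit Arguments. Unset Strict Implicit. Unset Printing Implicit Defensive.

Definition sumR (A : Type) (s : seq A) (f : A -> R) : R :=
  foldr (fun a acc => Rplus (f a) acc) R0 s.

Section Market.
(* bidders L = 'I_N (N = |L|); R^t = 'I_t -> R; y in R^p; g has q components *)
Variables (N t p q : nat).
Variable X : 'I_N -> ('I_t -> R) -> Prop.
Variable b : 'I_N -> ('I_t -> R) -> R.
Variable d : ('I_N -> 'I_t -> R) -> ('I_p -> R) -> R.
Variable g : ('I_N -> 'I_t -> R) -> ('I_p -> R) -> 'I_q -> R.

Definition feasible (S : {set 'I_N}) (x : 'I_N -> 'I_t -> R) (y : 'I_p -> R) : Prop :=
  (forall l, X l (x l)) /\ (forall j, Rle (g x y j) R0) /\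
  (forall l, l \notin S -> forall i, x l i = R0).

Definition objective (S : {set 'I_N}) (x : 'I_N -> 'I_t -> R) (y : 'I_p -> R) : R :=
  Rplus (sumR (enum S) (fun l => b l (x l))) (d x y).

Definition IsMinVal (S : {set 'I_N}) (v : R) : Prop :=
  (exists x y, feasible S x y /\ objective S x y = v) /\
  (forall x y, feasible S x y -> Rle v (objective S x y)).

(* J(B_S) in R u {+oo}: Some v = finite minimum v, None = +oo *)
Definition J (S : {set 'I_N}) : option R :=
  match excluded_middle_informative (exists v, IsMinVal S v) with
  | left H => Some (proj1_sig (constructive_indefinite_description _ H))
  | right _ => None
  end.

Definition kfeas : nat := \max_(Rm : {set 'I_N} | isSome (J (~: Rm))) #|Rm|.

End Market.

(* Adding bidders can only lower J, since a new bidder may bid 0.  Hence each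
   marginal loss J(S \ l) - J(S) with l in K is at most the total loss
   J(S \ K) - J(S), and it vanishes unless l lies in K and S.  As J(S \ K) is
   finite, removing the bidders outside S \ K, a superset of K :&: S, keeps the
   problem feasible; so at most k_feas marginal losses are nonzero. *)
From Pilot Require Import Defs.
From Stdlib Require Import Reals Lra FunctionalExtensionality ClassicalEpsilon.
From mathcomp Require Import all_boot.

Set Implicit Arguments.
Unset Strict Implicit.

Lemma sumR_filter (A : Type) (s : seq A) (f : A -> R) (P : pred A) :
  (forall a, ~~ P a -> f a = R0) -> sumR s f = sumR (filter P s) f.
Proof.
move=> f0; elim: s => [|a s IHs] //=.
by case Pa: (P a) => /=; rewrite IHs // f0 ?Pa //; ring.
Qed.

Lemma sumR_le_count (A : eqType) (s : seq A) (f : A -> R) (P : pred A) (c : R) :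
  Rle R0 c ->
  {in s, forall a, P a -> Rle (f a) c} -> {in s, forall a, ~~ P a -> f a = R0} ->
  Rle (sumR s f) (Rmult (INR (count P s)) c).
Proof.
move=> c_ge0; elim: s => [|a s IHs] fP fNP /=; first lra.
have IH : Rle (sumR s f) (Rmult (INR (count P s)) c).
  by apply: IHs => l ls; [apply: fP | apply: fNP]; rewrite inE ls orbT.
case Pa: (P a); rewrite ?add1n ?add0n.
- by rewrite S_INR; have := fP a (mem_head a s) Pa; lra.
- by rewrite fNP ?mem_head ?Pa //; lra.
Qed.

Lemma count_mem_enum (T : finType) (S K : {set T}) :
  count (mem S) (enum K) = #|K :&: S|.
Proof.
rewrite cardE /enum_mem -size_filter -filter_predI; congr size.
by apply: eq_filter => x; rewrite !inE andbC.
Qed.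

Section MarketObjective.
Variables (N t p q : nat).
Variable X : 'I_N -> ('I_t -> R) -> Prop.
Variable b : 'I_N -> ('I_t -> R) -> R.
Variable d : ('I_N -> 'I_t -> R) -> ('I_p -> R) -> R.
Variable g : ('I_N -> 'I_t -> R) -> ('I_p -> R) -> 'I_q -> R.
Hypothesis b0 : forall l, b l (fun _ => R0) = R0.
Hypothesis min_attained : forall S : {set 'I_N},
  (exists x y, feasible X g S x y) -> exists v, IsMinVal X b d g S v.

Local Notation J := (J X b d g).

Lemma IsMinVal_uniq S v w :
  IsMinVal X b d g S v -> IsMinVal X b d g S w -> v = w.
Proof.
move=> [[x [y [Fxy <-]]] v_min] [[x' [y' [Fxy' <-]]] w_min].
by have := v_min _ _ Fxy'; have := w_min _ _ Fxy; lra.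
Qed.

Lemma J_IsMinVal S v : J S = Some v -> IsMinVal X b d g S v.
Proof.
rewrite /Defs.J; case: excluded_middle_informative => // ex_min [<-].
exact: proj2_sig (constructive_indefinite_description _ ex_min).
Qed.

Lemma IsMinVal_J S v : IsMinVal X b d g S v -> J S = Some v.
Proof.
move=> v_min; rewrite /Defs.J; case: excluded_middle_informative => [ex_min|].
- congr Some; apply: IsMinVal_uniq v_min.
  exact: proj2_sig (constructive_indefinite_description _ ex_min).
- by case; exists v.
Qed.

Lemma objective_subset (A B : {set 'I_N}) x y : A \subset B ->
  (forall l, l \notin A -> forall i, x l i = R0) ->
  objective b d B x y = objective b d A x y.
Proof.
move=> sAB x0; rewrite /objective (@sumR_filter _ _ _ (mem A)).
- congr Rplus; rewrite /enum_mem -filter_predI; congr sumR.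
  by apply: eq_filter => l /=; case lA: (l \in A); rewrite //= (subsetP sAB).
- move=> l /x0 xl0; have -> : x l = (fun _ => R0) by apply: functional_extensionality.
  exact: b0.
Qed.

Lemma J_antimono (A B : {set 'I_N}) a : A \subset B -> J A = Some a ->
  exists v, J B = Some v /\ Rle v a.
Proof.
move=> sAB /J_IsMinVal [[x [y [[Xx [gxy xA0]] <-]]] _].
have FB : feasible X g B x y.
  by split; [|split] => // l lB; apply: xA0; apply: contra lB; apply: subsetP.
have [v v_min] : exists v, IsMinVal X b d g B v by apply: min_attained; exists x, y.
exists v; split; first exact: IsMinVal_J.
by rewrite -(objective_subset y sAB xA0); apply: (proj2 v_min).
Qed.

Lemma J_setD1_le (S K : {set 'I_N}) l vS vSK :
  J S = Some vS -> J (S :\: K) = Some vSK -> l \in K ->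
  exists v, [/\ J (S :\ l) = Some v, Rle v vSK & (l \notin S -> v = vS)].
Proof.
move=> JS JSK lK.
have sSK : S :\: K \subset S :\ l.
  by apply/subsetP => z /setDP [zS zK]; apply/setD1P; split=> //; apply: contraNneq zK => ->.
have [v [JSl v_le]] := J_antimono sSK JSK.
exists v; split=> // lS.
have Sl : S :\ l = S by apply/setDidPl; rewrite disjoint_sym disjoints1.
by move: JSl; rewrite Sl JS => -[].
Qed.

Lemma card_setI_le_kfeas (S K : {set 'I_N}) vSK :
  J (S :\: K) = Some vSK -> (#|K :&: S| <= kfeas X b d g)%N.
Proof.
move=> JSK; have feas_SK : isSome (J (~: ~: (S :\: K))) by rewrite setCK JSK.
apply: leq_trans (leq_bigmax_cond (F := fun Rm : {set _} => #|Rm|) _ feas_SK).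
by apply: subset_leq_card; apply/subsetP => z /setIP [zK zS]; rewrite !inE zK.
Qed.

End MarketObjective.

Theorem theorem2 (N t p q : nat)
  (X : 'I_N -> ('I_t -> R) -> Prop) (b : 'I_N -> ('I_t -> R) -> R)
  (d : ('I_N -> 'I_t -> R) -> ('I_p -> R) -> R)
  (g : ('I_N -> 'I_t -> R) -> ('I_p -> R) -> 'I_q -> R)
  (* \hat X_l is a subset of R^t_+ containing 0 *)
  (hXpos : forall l z, X l z -> forall i, Rle R0 (z i))
  (hX0 : forall l, X l (fun _ => R0))
  (* b_l : \hat X_l -> R_+, b_l(0) = 0 *)
  (hbpos : forall l z, X l z -> Rle R0 (b l z))
  (hb0 : forall l, b l (fun _ => R0) = R0)
  (* minima are attained whenever the problem is feasible with finite value *)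
  (hatt : forall S : {set 'I_N},
      (exists x y, feasible X g S x y) -> exists v, IsMinVal X b d g S v)
  (* J(B_L) < oo *)
  (hL : isSome (J X b d g [set: 'I_N]))
  (* k_feas >= 1 *)
  (hk : (1 <= kfeas X b d g)%N) :
  forall (K S : {set 'I_N}) (vSK : R),
    J X b d g (S :\: K) = Some vSK ->
    exists (vS : R) (fS : 'I_N -> R),
      J X b d g S = Some vS /\
      (forall l, l \in K -> J X b d g (S :\ l) = Some (fS l)) /\
      Rle (Rmult (Rinv (INR (kfeas X b d g))) (sumR (enum K) (fun l => Rminus (fS l) vS)))
          (Rminus vSK vS).
Proof.
(* Only b_l(0) = 0 and attainment are used. *)
move=> K S vSK JSK.
have [vS [JS vS_le]] := J_antimono hb0 hatt (subsetDl S K) JSK.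
pose fS l := odflt R0 (J X b d g (S :\ l)).
have fS_bounds l : l \in K ->
    [/\ J X b d g (S :\ l) = Some (fS l), Rle (fS l) vSK & (l \notin S -> fS l = vS)].
  by move=> /(J_setD1_le hb0 hatt JS JSK) [v [JSl ? ?]]; rewrite /fS JSl.
exists vS, fS; split=> //; split=> [l /fS_bounds [] //|].
set k := kfeas X b d g.
have k_gt0 : Rlt R0 (INR k) by apply: lt_0_INR; apply/ltP.
have count_le : Rle (INR (count (mem S) (enum K))) (INR k).
  by apply: le_INR; apply/leP; rewrite count_mem_enum (card_setI_le_kfeas JSK).
have sum_le : Rle (sumR (enum K) (fun l => Rminus (fS l) vS))
                  (Rmult (INR (count (mem S) (enum K))) (Rminus vSK vS)).
  apply: sumR_le_count => [|l|l]; first lra.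
  - by rewrite mem_enum => /fS_bounds [_ le_vSK _] _; lra.
  - by rewrite mem_enum => /fS_bounds [_ _ fS_out] /fS_out ->; lra.
apply: (Rmult_le_reg_l (INR k)) => //.
rewrite -Rmult_assoc Rinv_r ?Rmult_1_l; last lra.
by apply: Rle_trans sum_le _; apply: Rmult_le_compat_r; lra.
Qed.
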